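(* (a) The following are equivalent: $j(0)=0$; $F(0)=0$; $0\in X_+$; the system $w'(t)=q(v(t))w(t)$, $v'(t)=j(w_t,v_t)-\mu v(t)$, $(w,v)_0=(\varphi,\psi)$ has a zero solution. In either case $X_+\neq\emptyset$. If $j|_{U_+}$ is $C$-continuous at zero, then $F|_{U_+}$ is $C$-continuous at zero. Hence, if $j(0)=0$ and $j|_{U_+}$ is $C$-continuous at zero, then: for $\phi\in X_+$, if $x^\phi_t\to0$ in $C$ then $x^\phi_t\to0$ in $C^1$; if zero is globally attractive in $C$ it is so in $C^1$; for $E\subset X_+$, if zero is stable on $E$ in $C$ then also in $C^1$; and if zero is globally asymptotically stable in $C$ then also in $C^1$. If $j(0)=0$ and $$\forall\,\varepsilon>0\;\exists\,\delta>0\ \text{such that}\ j(\varphi,\psi)\le\varepsilon\ \ \forall\,(\varphi,\psi)\in U_+\ \text{with}\ \|\varphi\|_0\le\delta ,$$ then also: (b) Let $E\subset X_+$ with $0\in E$, and suppose $\|w^{(\varphi,\psi)}_t\|_0\le\|\varphi\|_0$ for all $(\varphi,\psi)\in E$, $t\ge0$. Then zero is stable on $E$ in $C$ and in $C^1$. (c) Let $\phi\in X_+$ and suppose that for $(w,v)=(w,v)^\phi$ one has $w(t)\to0$ as $t\to\infty$. Then $(w,v)_t\to0$ in $C$ and in $C^1$. In particular, if $w\to0$ for all initial data in $X_+$, then zero is globally attractive in both norms.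
   Context: Let $h>0$, $R_-<0$, $I=(R_-,\infty)$, $q:I\to\mathbb{R}$, $\mu>0$, $U=C^1([-h,0],\mathbb{R})\times C^1([-h,0],I)$, $j:U\to\mathbb{R}$, $U_+=C^1([-h,0],\mathbb{R}_+^2)$, $\|\cdot\|_0$ the sup-norm, $\|\phi\|_1=\|\phi\|_0+\|\phi'\|_0$; $x_t(s)=x(t+s)$. Define $F(\varphi,\psi)=(q(\psi(0))\varphi(0),\,j(\varphi,\psi)-\mu\psi(0))$ and $X_+=\{\phi\in C^1([-h,0],\mathbb{R}_+^2):\phi'(0)=F(\phi)\}$. Assume: $j$ is $C^1$ on $U$ with each derivative extending to a linear map on $C([-h,0],\mathbb{R}^2)$ depending continuously on $(\phi,\chi)$; for every bounded $B\subset U_+$ there is $L_B$ with $|j(\phi)-j(\chi)|\le L_B\|\phi-\chi\|_0$ on $B$; $j\ge0$ on $U_+$; $j(B_1\times B_2)$ is bounded whenever $B_1\times B_2\subset U_+$ with $B_1$ bounded; $q$ is bounded and $C^1$. Solutions from $X_+$ exist globally, stay in $X_+$ and define a continuous semiflow. Zero is stable on $E$ if for every $\varepsilon>0$ there is $\delta>0$ with $\|x^\phi_t\|<\varepsilon$ for all $t\ge0$ whenever $\phi\in E$, $\|\phi\|<\delta$. *)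

From Stdlib Require Import Reals ClassicalEpsilon.
From Coquelicot Require Import Coquelicot.
Open Scope R_scope.

(* A pair of real functions (w, v).  Used both for history segments
   (only the values on [-h,0] matter) and for solutions x = (w,v)
   defined on [-h, oo). *)
Definition seg : Type := ((R -> R) * (R -> R))%type.

Definition Iv (h s : R) : Prop := -h <= s <= 0.

Definition deriv_within (D : R -> Prop) (f : R -> R) (s l : R) : Prop :=
  filterlim (fun y => (f y - f s) / (y - s))
    (within (fun y => D y /\ y <> s) (locally s)) (locally l).

Definition C1on (h : R) (f : R -> R) : Prop :=
  exists f' : R -> R,
    (forall s, Iv h s -> deriv_within (Iv h) f s (f' s)) /\
    (forall s, Iv h s -> filterlim f' (within (Iv h) (locally s)) (locally (f' s))).

(* the derivative on [-h,0] of a C^1 function (unique, since the filter is proper) *)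
Definition dseg (h : R) (f : R -> R) (s : R) : R :=
  epsilon (inhabits 0) (fun l => deriv_within (Iv h) f s l).

Definition sup0 (h : R) (f : R -> R) : R :=
  real (Lub_Rbar (fun y => exists s, Iv h s /\ y = Rabs (f s))).

Definition norm0 (h : R) (p : seg) : R := Rmax (sup0 h (fst p)) (sup0 h (snd p)).

Definition norm1 (h : R) (p : seg) : R :=
  norm0 h p + Rmax (sup0 h (dseg h (fst p))) (sup0 h (dseg h (snd p))).

Definition segsub (p r : seg) : seg :=
  (fun s => fst p s - fst r s, fun s => snd p s - snd r s).

Definition zseg : seg := (fun _ => 0, fun _ => 0).

Definition shift (x : seg) (t : R) : seg :=
  (fun s => fst x (t + s), fun s => snd x (t + s)).

Definition inU (h Rm : R) (p : seg) : Prop :=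
  C1on h (fst p) /\ C1on h (snd p) /\ (forall s, Iv h s -> Rm < snd p s).

Definition inUp (h : R) (p : seg) : Prop :=
  C1on h (fst p) /\ C1on h (snd p) /\
  (forall s, Iv h s -> 0 <= fst p s /\ 0 <= snd p s).

Definition Ff (q : R -> R) (j : seg -> R) (mu : R) (p : seg) : R * R :=
  (q (snd p 0) * fst p 0, j p - mu * snd p 0).

Definition inXp (h : R) (q : R -> R) (j : seg -> R) (mu : R) (p : seg) : Prop :=
  inUp h p /\
  deriv_within (Iv h) (fst p) 0 (fst (Ff q j mu p)) /\
  deriv_within (Iv h) (snd p) 0 (snd (Ff q j mu p)).

Definition is_solution (h : R) (q : R -> R) (j : seg -> R) (mu : R) (x phi : seg) : Prop :=
  (forall s, Iv h s -> fst x s = fst phi s /\ snd x s = snd phi s) /\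
  (forall t, 0 <= t ->
     deriv_within (fun u => 0 <= u) (fst x) t (q (snd x t) * fst x t) /\
     deriv_within (fun u => 0 <= u) (snd x) t (j (shift x t) - mu * snd x t)).

Definition norm2 (a : R * R) : R := Rmax (Rabs (fst a)) (Rabs (snd a)).

Definition Ccont0_j (h : R) (j : seg -> R) : Prop :=
  forall eps, 0 < eps -> exists del, 0 < del /\
    forall p, inUp h p -> norm0 h p < del -> Rabs (j p - j zseg) < eps.

Definition Ccont0_F (h : R) (G : seg -> R * R) : Prop :=
  forall eps, 0 < eps -> exists del, 0 < del /\
    forall p, inUp h p -> norm0 h p < del ->
      norm2 (fst (G p) - fst (G zseg), snd (G p) - snd (G zseg)) < eps.

Definition conv0 (N : seg -> R) (x : seg) : Prop :=
  is_lim (fun t => N (shift x t)) p_infty 0.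

Definition stable_on (N : seg -> R) (sol : seg -> seg) (E : seg -> Prop) : Prop :=
  forall eps, 0 < eps -> exists del, 0 < del /\
    forall phi, E phi -> N phi < del -> forall t, 0 <= t -> N (shift (sol phi) t) < eps.

Definition glob_attr (N : seg -> R) (sol : seg -> seg) (X : seg -> Prop) : Prop :=
  forall phi, X phi -> conv0 N (sol phi).

Definition GAS (N : seg -> R) (sol : seg -> seg) (X : seg -> Prop) : Prop :=
  stable_on N sol X /\ glob_attr N sol X.

From Stdlib Require Import Reals ClassicalEpsilon Lra.
From Coquelicot Require Import Coquelicot.
Open Scope R_scope.

(* Everything reduces to one window estimate: the C-norm of x_t is bounded by the
   sizes of w and v on [t-h, t] (of the initial datum where t+s < 0), and through
   w' = q(v) w and v' = j(x_t) - mu v its derivative is bounded by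
   M |w| + |j(x_t)| + mu |v|.  So x_t is C^1-small as soon as w, v and j(x_t) are
   small on the window.  In (a), C-smallness of x_t makes j(x_t) small by
   C-continuity of j at zero.  In (b) and (c), smallness of w makes j(x_t) small,
   and v is controlled by comparison: if j(x_t) <= e on [T, oo), then
   (v - e/mu) e^(mu t) is nonincreasing there. *)

Lemma deriv_within_eps D f s l : deriv_within D f s l <->
  forall eps, 0 < eps -> exists del, 0 < del /\ forall y, D y -> y <> s ->
    Rabs (y - s) < del -> Rabs ((f y - f s) / (y - s) - l) < eps.
Proof.
  unfold deriv_within; rewrite filterlim_locally; split.
  - intros H eps Heps. destruct (H (mkposreal eps Heps)) as [d Hd].
    exists d; split; [apply cond_pos|]. intros y Dy ny Hy.
    apply (Hd y); [exact Hy | split; auto].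
  - intros H eps. destruct (H eps (cond_pos eps)) as [d [Hd0 Hd]].
    exists (mkposreal d Hd0). intros y Hy [Dy ny]. apply (Hd y Dy ny Hy).
Qed.

Lemma filterlim_within_eps D f s l : filterlim f (within D (locally s)) (locally l) <->
  forall eps, 0 < eps -> exists del, 0 < del /\ forall y, D y ->
    Rabs (y - s) < del -> Rabs (f y - l) < eps.
Proof.
  rewrite filterlim_locally; split.
  - intros H eps Heps. destruct (H (mkposreal eps Heps)) as [d Hd].
    exists d; split; [apply cond_pos|]. intros y Dy Hy. apply (Hd y); auto.
  - intros H eps. destruct (H eps (cond_pos eps)) as [d [Hd0 Hd]].
    exists (mkposreal d Hd0). intros y Hy Dy. apply (Hd y Dy Hy).
Qed.

Lemma is_lim_p_infty_0_eps (f : R -> R) : is_lim f p_infty 0 <->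
  forall eps, 0 < eps -> Rbar_locally p_infty (fun t => Rabs (f t) < eps).
Proof.
  change (filterlim f (Rbar_locally' p_infty) (locally 0) <->
    forall eps, 0 < eps -> Rbar_locally p_infty (fun t => Rabs (f t) < eps)).
  rewrite filterlim_locally; split.
  - intros H eps Heps. destruct (H (mkposreal eps Heps)) as [T HT].
    exists T. intros t Ht. generalize (HT t Ht).
    change (Rabs (f t - 0) < eps -> Rabs (f t) < eps). now rewrite Rminus_0_r.
  - intros H eps. destruct (H eps (cond_pos eps)) as [T HT].
    exists T. intros t Ht. change (Rabs (f t - 0) < eps). rewrite Rminus_0_r. auto.
Qed.

Lemma eventually_ge T : Rbar_locally p_infty (fun t => T <= t).
Proof. exists T. intros; lra. Qed.

Lemma window_eventually h (P : R -> Prop) : Rbar_locally p_infty P ->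
  Rbar_locally p_infty (fun t => 0 <= t /\ forall s, Iv h s -> 0 <= t + s /\ P (t + s)).
Proof.
  intros [T HT]. exists (Rmax T 0 + Rabs h). intros t Ht.
  generalize (Rmax_l T 0) (Rmax_r T 0) (Rle_abs h) (Rabs_pos h). intros. split; [lra|].
  intros s [Hs1 Hs2]. split; [lra | apply HT; lra].
Qed.

Lemma deriv_within_unique D f s l1 l2 :
  (forall del, 0 < del -> exists y, D y /\ y <> s /\ Rabs (y - s) < del) ->
  deriv_within D f s l1 -> deriv_within D f s l2 -> l1 = l2.
Proof.
  intros Hacc H1 H2. rewrite deriv_within_eps in H1, H2.
  destruct (Req_dec l1 l2) as [|Hne]; auto. exfalso.
  set (e := Rabs (l1 - l2) / 2).
  assert (He : 0 < e) by (unfold e; assert (0 < Rabs (l1 - l2)) by (apply Rabs_pos_lt; lra); lra).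
  destruct (H1 e He) as [d1 [Hd1 K1]]. destruct (H2 e He) as [d2 [Hd2 K2]].
  destruct (Hacc (Rmin d1 d2)) as [y [Dy [ny Hy]]]; [apply Rmin_pos; auto|].
  assert (A1 := K1 y Dy ny (Rlt_le_trans _ _ _ Hy (Rmin_l _ _))).
  assert (A2 := K2 y Dy ny (Rlt_le_trans _ _ _ Hy (Rmin_r _ _))).
  set (z := (f y - f s) / (y - s)) in *.
  assert (Rabs (l1 - l2) <= Rabs (z - l1) + Rabs (z - l2)).
  { replace (l1 - l2) with (- (z - l1) + (z - l2)) by ring.
    eapply Rle_trans; [apply Rabs_triang|]. rewrite Rabs_Ropp. lra. }
  unfold e in *. lra.
Qed.

Lemma deriv_within_continuous D f s l : deriv_within D f s l ->
  forall eps, 0 < eps -> exists del, 0 < del /\ forall y, D y -> Rabs (y - s) < del ->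
    Rabs (f y - f s) < eps.
Proof.
  rewrite deriv_within_eps. intros H eps Heps. destruct (H 1 Rlt_0_1) as [d [Hd K]].
  assert (Hl : 0 < Rabs l + 1) by (generalize (Rabs_pos l); lra).
  exists (Rmin d (eps / (Rabs l + 1))).
  split; [apply Rmin_pos; auto; apply Rdiv_lt_0_compat; auto|].
  intros y Dy Hy. destruct (Req_dec y s) as [->|ny].
  { rewrite Rminus_diag, Rabs_R0; auto. }
  assert (Hq : Rabs ((f y - f s) / (y - s)) <= Rabs l + 1).
  { replace ((f y - f s) / (y - s)) with (((f y - f s) / (y - s) - l) + l) by ring.
    eapply Rle_trans; [apply Rabs_triang|].
    generalize (K y Dy ny (Rlt_le_trans _ _ _ Hy (Rmin_l _ _))). lra. }
  assert (Hys : Rabs (y - s) * (Rabs l + 1) < eps).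
  { apply (Rmult_lt_compat_r (Rabs l + 1)) in Hy; auto.
    eapply Rlt_le_trans; [exact Hy|].
    apply (Rle_trans _ (eps / (Rabs l + 1) * (Rabs l + 1)));
      [apply Rmult_le_compat_r; [lra | apply Rmin_r]|].
    right; field; lra. }
  replace (f y - f s) with ((f y - f s) / (y - s) * (y - s)) by (field; lra).
  rewrite Rabs_mult. generalize (Rabs_pos (y - s)). nra.
Qed.

Lemma deriv_within_ext (D : R -> Prop) f g a l : (forall y, D y -> f y = g y) -> D a ->
  deriv_within D f a l -> deriv_within D g a l.
Proof.
  intros E Da H. rewrite deriv_within_eps in *. intros eps Heps.
  destruct (H eps Heps) as [d [Hd K]].
  exists d; split; auto. intros y Dy ny Hy. rewrite <- !E; auto.
Qed.

Lemma deriv_within_translate (D D' : R -> Prop) f b c l :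
  deriv_within D f (c + b) l ->
  (exists e, 0 < e /\ forall y, D' y -> Rabs (y - b) < e -> D (c + y)) ->
  deriv_within D' (fun y => f (c + y)) b l.
Proof.
  intros H [e [He HD]]. rewrite deriv_within_eps in *. intros eps Heps.
  destruct (H eps Heps) as [d [Hd K]]. exists (Rmin d e). split; [apply Rmin_pos; auto|].
  intros y Dy ny Hy.
  assert (Hy1 : Rabs (y - b) < d) by (eapply Rlt_le_trans; [exact Hy | apply Rmin_l]).
  assert (Hy2 : Rabs (y - b) < e) by (eapply Rlt_le_trans; [exact Hy | apply Rmin_r]).
  replace (y - b) with ((c + y) - (c + b)) by ring.
  apply K; [apply HD; auto | intro E; apply ny; lra |].
  replace ((c + y) - (c + b)) with (y - b) by ring. auto.
Qed.

Lemma deriv_within_nonneg_is_derive f t l : 0 < t ->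
  deriv_within (fun u => 0 <= u) f t l -> is_derive f t l.
Proof.
  intros Ht H. rewrite is_derive_Reals. rewrite deriv_within_eps in H. intros eps Heps.
  destruct (H eps Heps) as [d [Hd K]].
  exists (mkposreal (Rmin d t) (Rmin_pos _ _ Hd Ht)). simpl. intros k nk Hk.
  assert (Hk1 : Rabs k < d) by (eapply Rlt_le_trans; [exact Hk | apply Rmin_l]).
  assert (Hk2 : Rabs k < t) by (eapply Rlt_le_trans; [exact Hk | apply Rmin_r]).
  replace k with ((t + k) - t) at 2 by ring.
  apply K; [unfold Rabs in Hk2; destruct Rcase_abs in Hk2; lra | lra |].
  replace (t + k - t) with k by ring. auto.
Qed.

Lemma deriv_within_const0 D s : deriv_within D (fun _ => 0) s 0.
Proof.
  rewrite deriv_within_eps. intros eps Heps. exists 1; split; [lra|]. intros y _ ny _.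
  replace ((0 - 0) / (y - s) - 0) with 0 by (field; lra). rewrite Rabs_R0; auto.
Qed.

Lemma decay_comparison (v dv : R -> R) mu e T : 0 < mu ->
  (forall x, T <= x -> is_derive v x (dv x)) ->
  (forall x, T <= x -> dv x <= e - mu * v x) ->
  forall x, T <= x -> (v x - e / mu) * exp (mu * x) <= (v T - e / mu) * exp (mu * T).
Proof.
  intros Hmu Hd Hle x Hx.
  set (g := fun y => (v y - e / mu) * exp (mu * y)).
  set (dg := fun y => (dv y + mu * v y - e) * exp (mu * y)).
  assert (Hg : forall y, T <= y -> is_derive g y (dg y)).
  { intros y Hy. unfold g, dg. assert (H := Hd y Hy). auto_derive.
    - exists (dv y); exact H.
    - replace (Derive (fun x0 => v x0) y) with (dv y) by (symmetry; apply is_derive_unique; auto).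
      field; lra. }
  destruct (Req_dec x T) as [->|nx]; [lra|].
  destruct (MVT_gen g T x dg) as [c [Hc E]].
  - intros y Hy. apply Hg. rewrite Rmin_left in Hy; lra.
  - intros y Hy. rewrite Rmin_left in Hy by lra. apply derivable_continuous_pt.
    exists (dg y). apply is_derive_Reals, Hg; lra.
  - rewrite Rmin_left in Hc by lra. rewrite Rmax_right in Hc by lra.
    assert (dg c <= 0).
    { unfold dg. generalize (Hle c ltac:(lra)) (exp_pos (mu * c)). nra. }
    change (g x <= g T). assert (dg c * (x - T) <= 0) by nra. lra.
Qed.

Lemma exp_eventually_dominates Y eta mu : 0 < eta -> 0 < mu ->
  Rbar_locally p_infty (fun t => Y < eta * exp (mu * t)).
Proof.
  intros Heta Hmu. set (T := Rabs Y / (eta * mu)).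
  exists (Rmax 0 T). intros t Ht.
  assert (Ht0 : 0 < t) by (generalize (Rmax_l 0 T); lra).
  assert (HTt : T < t) by (generalize (Rmax_r 0 T); lra).
  assert (HY : Rabs Y = eta * (mu * T)) by (unfold T; field; lra).
  assert (eta * (mu * T) < eta * (mu * t))
    by (apply Rmult_lt_compat_l; [|apply Rmult_lt_compat_l]; lra).
  assert (1 + mu * t < exp (mu * t)) by (apply exp_ineq1; nra).
  generalize (Rle_abs Y). nra.
Qed.

Section Segments.

Variable h : R.
Hypothesis h_pos : 0 < h.

Lemma Iv_0 : Iv h 0.
Proof. unfold Iv; lra. Qed.

Lemma Iv_punctured_near s del : Iv h s -> 0 < del ->
  exists y, Iv h y /\ y <> s /\ Rabs (y - s) < del.
Proof.
  intros [H1 H2] Hd. set (e := Rmin del h / 2).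
  assert (0 < e) by (unfold e; assert (0 < Rmin del h) by (apply Rmin_pos; auto); lra).
  assert (e < del) by (unfold e; generalize (Rmin_l del h); lra).
  assert (2 * e <= h) by (unfold e; generalize (Rmin_r del h); lra).
  destruct (Rle_dec (-h) (s - e)).
  - exists (s - e). unfold Iv. repeat split; try lra.
    replace (s - e - s) with (- e) by ring. rewrite Rabs_Ropp, Rabs_pos_eq; lra.
  - exists (s + e). unfold Iv. repeat split; try lra.
    replace (s + e - s) with e by ring. rewrite Rabs_pos_eq; lra.
Qed.

Lemma dseg_unique f s l : Iv h s -> deriv_within (Iv h) f s l -> dseg h f s = l.
Proof.
  intros Hs H. unfold dseg.
  pose proof (epsilon_spec (inhabits 0) _ (ex_intro _ l H)) as H'.
  apply (deriv_within_unique (Iv h) f s); auto. intros; apply Iv_punctured_near; auto.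
Qed.

Lemma sup0_le f c : (forall s, Iv h s -> Rabs (f s) <= c) -> sup0 h f <= c.
Proof.
  intros H. unfold sup0.
  set (E := fun y => exists s, Iv h s /\ y = Rabs (f s)).
  destruct (Lub_Rbar_correct E) as [ub lub].
  assert (A : Rbar_le (Lub_Rbar E) c) by (apply lub; intros x [s [Hs ->]]; simpl; auto).
  assert (B : Rbar_le (Rabs (f 0)) (Lub_Rbar E))
    by (apply ub; exists 0; split; [apply Iv_0 | auto]).
  destruct (Lub_Rbar E); simpl in *; auto; contradiction.
Qed.

Lemma sup0_ge0 f : 0 <= sup0 h f.
Proof.
  unfold sup0. set (E := fun y => exists s, Iv h s /\ y = Rabs (f s)).
  destruct (Lub_Rbar_correct E) as [ub _].
  assert (B : Rbar_le (Rabs (f 0)) (Lub_Rbar E))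
    by (apply ub; exists 0; split; [apply Iv_0 | auto]).
  destruct (Lub_Rbar E); simpl in *; try lra. generalize (Rabs_pos (f 0)); lra.
Qed.

Lemma le_sup0 f s : (exists B, forall s, Iv h s -> Rabs (f s) <= B) -> Iv h s ->
  Rabs (f s) <= sup0 h f.
Proof.
  intros [B HB] Hs. unfold sup0.
  set (E := fun y => exists s, Iv h s /\ y = Rabs (f s)).
  destruct (Lub_Rbar_correct E) as [ub lub].
  assert (A : Rbar_le (Lub_Rbar E) B) by (apply lub; intros x [s' [Hs' ->]]; simpl; auto).
  assert (C : Rbar_le (Rabs (f s)) (Lub_Rbar E)) by (apply ub; exists s; split; auto).
  destruct (Lub_Rbar E); simpl in *; auto; contradiction.
Qed.

Definition clamp y := Rmax (-h) (Rmin 0 y).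

Lemma clamp_Iv y : Iv h (clamp y).
Proof. unfold clamp, Iv, Rmax, Rmin. destruct (Rle_dec 0 y); destruct (Rle_dec (-h) _); lra. Qed.

Lemma clamp_id y : Iv h y -> clamp y = y.
Proof.
  unfold clamp, Iv, Rmax, Rmin. intros. destruct (Rle_dec 0 y); destruct (Rle_dec (-h) _); lra.
Qed.

Lemma clamp_dist y c : Iv h c -> Rabs (clamp y - c) <= Rabs (y - c).
Proof.
  unfold Iv, clamp, Rmax, Rmin. intros Hc.
  destruct (Rle_dec 0 y); destruct (Rle_dec (-h) _); unfold Rabs; repeat destruct Rcase_abs; lra.
Qed.

(* Clamping to [-h, 0] turns continuity on [-h, 0] into the two-sided continuity
   that [continuity_ab_maj] needs. *)
Lemma continuous_Iv_bounded g :
  (forall s, Iv h s -> forall eps, 0 < eps -> exists del, 0 < del /\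
     forall y, Iv h y -> Rabs (y - s) < del -> Rabs (g y - g s) < eps) ->
  exists B, forall s, Iv h s -> Rabs (g s) <= B.
Proof.
  intros H.
  destruct (continuity_ab_maj (fun y => Rabs (g (clamp y))) (-h) 0) as [Mx [HM _]]; [lra | |].
  - intros c Hc. assert (Ic : Iv h c) by (unfold Iv; lra).
    intros eps Heps. destruct (H c Ic eps Heps) as [d [Hd K]].
    exists d; split; auto. intros x [_ Hx]. simpl in *. unfold R_dist in *.
    rewrite (clamp_id c Ic).
    eapply Rle_lt_trans; [apply Rabs_triang_inv2|].
    apply K; [apply clamp_Iv | eapply Rle_lt_trans; [apply clamp_dist; auto | exact Hx]].
  - exists (Rabs (g (clamp Mx))). intros s Hs.
    generalize (HM s ltac:(unfold Iv in Hs; lra)). rewrite (clamp_id s Hs). auto.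
Qed.

Lemma C1on_dseg f : C1on h f ->
  (forall s, Iv h s -> deriv_within (Iv h) f s (dseg h f s)) /\
  (forall s, Iv h s -> forall eps, 0 < eps -> exists del, 0 < del /\
     forall y, Iv h y -> Rabs (y - s) < del -> Rabs (dseg h f y - dseg h f s) < eps).
Proof.
  intros [f' [H1 H2]].
  assert (E : forall s, Iv h s -> dseg h f s = f' s) by (intros; apply dseg_unique; auto).
  split.
  - intros s Hs. rewrite E; auto.
  - intros s Hs eps Heps.
    destruct (proj1 (filterlim_within_eps _ _ _ _) (H2 s Hs) eps Heps) as [d [Hd K]].
    exists d; split; auto. intros y Hy Hys. rewrite !E; auto.
Qed.

Lemma C1on_le_sup0 f s : C1on h f -> Iv h s ->
  Rabs (f s) <= sup0 h f /\ Rabs (dseg h f s) <= sup0 h (dseg h f).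
Proof.
  intros HC Hs. destruct (C1on_dseg f HC) as [D1 D2].
  split; apply le_sup0; auto; apply continuous_Iv_bounded; auto.
  intros s' Hs'. apply (deriv_within_continuous (Iv h) f s' (dseg h f s')); auto.
Qed.

(* The bound at the excluded point [s0] comes from continuity of the derivative. *)
Lemma sup0_dseg_le_but_one f s0 c : C1on h f -> Iv h s0 ->
  (forall s, Iv h s -> s <> s0 -> Rabs (dseg h f s) <= c) ->
  sup0 h (dseg h f) <= c.
Proof.
  intros HC Hs0 H. apply sup0_le. intros s Hs.
  destruct (Req_dec s s0) as [->|ne]; [|auto].
  destruct (Rle_dec (Rabs (dseg h f s0)) c) as [|nle]; auto. exfalso.
  destruct (proj2 (C1on_dseg f HC) s0 Hs0 (Rabs (dseg h f s0) - c)) as [d [Hd K]]; [lra|].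
  destruct (Iv_punctured_near s0 d Hs0 Hd) as [y [Hy [ny Hyd]]].
  assert (K1 := K y Hy Hyd). assert (K2 := H y Hy ny).
  assert (Rabs (dseg h f s0) <= Rabs (dseg h f y) + Rabs (dseg h f y - dseg h f s0)).
  { replace (dseg h f s0) with (dseg h f y - (dseg h f y - dseg h f s0)) at 1 by ring.
    eapply Rle_trans; [apply Rabs_triang|]. rewrite Rabs_Ropp; lra. }
  lra.
Qed.

Lemma norm0_ge0 p : 0 <= norm0 h p.
Proof. unfold norm0. eapply Rle_trans; [apply (sup0_ge0 (fst p)) | apply Rmax_l]. Qed.

Lemma norm0_le_norm1 p : norm0 h p <= norm1 h p.
Proof.
  unfold norm1. generalize (sup0_ge0 (dseg h (fst p))).
  generalize (Rmax_l (sup0 h (dseg h (fst p))) (sup0 h (dseg h (snd p)))). lra.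
Qed.

Lemma conv0_norm0_of_norm1 x : conv0 (norm1 h) x -> conv0 (norm0 h) x.
Proof.
  unfold conv0. rewrite !is_lim_p_infty_0_eps. intros H eps Heps.
  eapply filter_imp; [|exact (H eps Heps)]. intros t.
  assert (H0 := norm0_ge0 (shift x t)). assert (H01 := norm0_le_norm1 (shift x t)).
  rewrite !Rabs_pos_eq; lra.
Qed.

Lemma inUp_le_norm p s : inUp h p -> Iv h s ->
  Rabs (fst p s) <= norm0 h p /\ Rabs (snd p s) <= norm0 h p /\
  Rabs (dseg h (fst p) s) <= norm1 h p - norm0 h p /\
  Rabs (dseg h (snd p) s) <= norm1 h p - norm0 h p.
Proof.
  intros [C1 [C2 _]] Hs. unfold norm1, norm0.
  destruct (C1on_le_sup0 _ s C1 Hs), (C1on_le_sup0 _ s C2 Hs).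
  generalize (Rmax_l (sup0 h (fst p)) (sup0 h (snd p))) (Rmax_r (sup0 h (fst p)) (sup0 h (snd p))).
  generalize (Rmax_l (sup0 h (dseg h (fst p))) (sup0 h (dseg h (snd p))))
    (Rmax_r (sup0 h (dseg h (fst p))) (sup0 h (dseg h (snd p)))).
  lra.
Qed.

Lemma sup0_shift_le (f g : R -> R) t c : 0 <= t ->
  (forall s, Iv h s -> f s = g s) ->
  (forall s, Iv h s -> 0 <= t + s -> Rabs (f (t + s)) <= c) ->
  (forall s, Iv h s -> t + s < 0 -> Rabs (g (t + s)) <= c) ->
  sup0 h (fun s => f (t + s)) <= c.
Proof.
  intros Ht E H1 H2. apply sup0_le. intros s Hs.
  destruct (Rle_dec 0 (t + s)); auto.
  rewrite E; [apply H2; auto; lra | unfold Iv in *; lra].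
Qed.

(* [f] on [0, oo) continues [g] on [-h, 0]; [e] is the right derivative of [f]. *)
Lemma sup0_dseg_shift_le (f g e : R -> R) t c : 0 <= t ->
  (forall s, Iv h s -> f s = g s) -> C1on h g -> C1on h (fun s => f (t + s)) ->
  (forall tau, 0 <= tau -> deriv_within (fun u => 0 <= u) f tau (e tau)) ->
  (forall s, Iv h s -> 0 < t + s -> Rabs (e (t + s)) <= c) ->
  (forall s, Iv h s -> t + s < 0 -> Rabs (dseg h g (t + s)) <= c) ->
  sup0 h (dseg h (fun s => f (t + s))) <= c.
Proof.
  intros Ht Efg Cg Cf Hd Hc1 Hc2.
  assert (Hoff0 : forall s, Iv h s -> t + s <> 0 -> Rabs (dseg h (fun s => f (t + s)) s) <= c).
  { intros s Hs nz. destruct (Rlt_dec 0 (t + s)).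
    - rewrite (dseg_unique _ s (e (t + s))); auto.
      apply (deriv_within_translate (fun u => 0 <= u)); [apply Hd; lra|].
      exists (t + s); split; auto. intros y Hy Hys.
      unfold Rabs in Hys; destruct Rcase_abs in Hys; lra.
    - assert (Hts : t + s < 0) by lra. assert (Iv h (t + s)) by (unfold Iv in *; lra).
      rewrite (dseg_unique _ s (dseg h g (t + s))); auto.
      apply (deriv_within_translate (Iv h)).
      + apply (deriv_within_ext (Iv h) g f); auto; [intros; symmetry; auto|].
        apply (C1on_dseg g Cg); auto.
      + exists (- (t + s)); split; [lra|]. intros y Hy Hys. unfold Iv in *.
        unfold Rabs in Hys; destruct Rcase_abs in Hys; lra. }
  destruct (Rle_dec t h).
  - apply (sup0_dseg_le_but_one _ (- t)); auto; [unfold Iv; lra|].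
    intros s Hs ns. apply Hoff0; auto. lra.
  - apply sup0_le. intros s Hs. apply Hoff0; auto. unfold Iv in Hs; lra.
Qed.

End Segments.

Lemma inUp_zseg h : inUp h zseg.
Proof.
  assert (C : C1on h (fun _ => 0)).
  { exists (fun _ => 0). split; [intros; apply deriv_within_const0|].
    intros s _. apply filterlim_const. }
  split; [exact C|]. split; [exact C|]. intros; simpl; lra.
Qed.

Lemma Ff_zseg q j mu : Ff q j mu zseg = (0, 0) <-> j zseg = 0.
Proof.
  unfold Ff; simpl. split.
  - intros E. injection E. lra.
  - intros E. rewrite E. f_equal; ring.
Qed.

Lemma inXp_zseg h q j mu : 0 < h -> (inXp h q j mu zseg <-> j zseg = 0).
Proof.
  intros Hh. unfold inXp; simpl. split.
  - intros [_ [_ D]].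
    assert (E := deriv_within_unique (Iv h) (fun _ => 0) 0 _ _
      (fun d Hd => Iv_punctured_near h Hh 0 d (Iv_0 h Hh) Hd) (deriv_within_const0 (Iv h) 0) D).
    lra.
  - intros E. split; [apply inUp_zseg|]. split.
    + replace (q 0 * 0) with 0 by ring. apply deriv_within_const0.
    + rewrite E. replace (0 - mu * 0) with 0 by ring. apply deriv_within_const0.
Qed.

Lemma is_solution_zseg h q j mu : is_solution h q j mu zseg zseg <-> j zseg = 0.
Proof.
  assert (Hshift : forall t, shift zseg t = zseg) by reflexivity.
  unfold is_solution. split.
  - intros [_ D]. destruct (D 0 (Rle_refl 0)) as [_ D2]. rewrite Hshift in D2. simpl in D2.
    assert (Hacc : forall d, 0 < d -> exists y, 0 <= y /\ y <> 0 /\ Rabs (y - 0) < d).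
    { intros d Hd. exists (d / 2). rewrite Rminus_0_r, Rabs_pos_eq; repeat split; lra. }
    assert (E := deriv_within_unique _ (fun _ => 0) 0 _ _ Hacc (deriv_within_const0 _ 0) D2).
    lra.
  - intros E. split; [intros; simpl; auto|].
    intros t _. rewrite Hshift, E. simpl. split.
    + replace (q 0 * 0) with 0 by ring. apply deriv_within_const0.
    + replace (0 - mu * 0) with 0 by ring. apply deriv_within_const0.
Qed.

Definition vanishes_with_fst h (j : seg -> R) : Prop :=
  forall eps, 0 < eps -> exists del, 0 < del /\
    forall p, inUp h p -> sup0 h (fst p) <= del -> j p <= eps.

Section Semiflow.

Variables (h Rm mu M : R) (q : R -> R) (j : seg -> R) (sol : seg -> seg).
Hypotheses (h_pos : 0 < h) (Rm_neg : Rm < 0) (mu_pos : 0 < mu).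
Hypothesis q_bounded : forall y, Rm < y -> Rabs (q y) <= M.
Hypothesis sol_semiflow : forall phi, inXp h q j mu phi ->
  is_solution h q j mu (sol phi) phi /\ forall t, 0 <= t -> inXp h q j mu (shift (sol phi) t).

Local Notation Xp := (inXp h q j mu).
Local Notation w phi := (fst (sol phi)).
Local Notation v phi := (snd (sol phi)).
Local Notation jx phi t := (j (shift (sol phi) t)).

Lemma M_ge0 : 0 <= M.
Proof. eapply Rle_trans; [apply Rabs_pos | apply (q_bounded 0); lra]. Qed.

Lemma sol_initial phi s : Xp phi -> Iv h s -> w phi s = fst phi s /\ v phi s = snd phi s.
Proof. intros Xphi. apply (proj1 (proj1 (sol_semiflow phi Xphi))). Qed.

Lemma sol_deriv phi t : Xp phi -> 0 <= t ->
  deriv_within (fun u => 0 <= u) (w phi) t (q (v phi t) * w phi t) /\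
  deriv_within (fun u => 0 <= u) (v phi) t (jx phi t - mu * v phi t).
Proof. intros Xphi. apply (proj2 (proj1 (sol_semiflow phi Xphi))). Qed.

Lemma v_is_derive phi t : Xp phi -> 0 < t -> is_derive (v phi) t (jx phi t - mu * v phi t).
Proof. intros Xphi Ht. apply deriv_within_nonneg_is_derive, sol_deriv; auto; lra. Qed.

Lemma sol_shift_inUp phi t : Xp phi -> 0 <= t -> inUp h (shift (sol phi) t).
Proof. intros Xphi Ht. apply (proj2 (sol_semiflow phi Xphi) t Ht). Qed.

Lemma sol_nonneg phi t : Xp phi -> 0 <= t -> 0 <= w phi t /\ 0 <= v phi t.
Proof.
  intros Xphi Ht. destruct (sol_shift_inUp phi t Xphi Ht) as [_ [_ P]].
  generalize (P 0 (Iv_0 h h_pos)). simpl. rewrite Rplus_0_r. auto.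
Qed.

Lemma sol_le_sup0 phi t : Xp phi -> 0 <= t -> Rabs (w phi t) <= sup0 h (fst (shift (sol phi) t)).
Proof.
  intros Xphi Ht. destruct (sol_shift_inUp phi t Xphi Ht) as [C1 _].
  generalize (proj1 (C1on_le_sup0 h h_pos _ 0 C1 (Iv_0 h h_pos))). simpl. rewrite Rplus_0_r. auto.
Qed.

Lemma sol_le_norm0 phi t : Xp phi -> 0 <= t ->
  Rabs (w phi t) <= norm0 h (shift (sol phi) t) /\ Rabs (v phi t) <= norm0 h (shift (sol phi) t).
Proof.
  intros Xphi Ht.
  generalize (inUp_le_norm h h_pos _ 0 (sol_shift_inUp phi t Xphi Ht) (Iv_0 h h_pos)).
  simpl. rewrite Rplus_0_r. tauto.
Qed.

Lemma q_w_le phi t A : Xp phi -> 0 <= t -> Rabs (w phi t) <= A ->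
  Rabs (q (v phi t) * w phi t) <= M * A.
Proof.
  intros Xphi Ht HA. rewrite Rabs_mult.
  apply Rmult_le_compat; auto using Rabs_pos.
  apply q_bounded. generalize (sol_nonneg phi t Xphi Ht). lra.
Qed.

Lemma norm0_shift_le phi t A : Xp phi -> 0 <= t ->
  (forall s, Iv h s -> 0 <= t + s -> Rabs (w phi (t + s)) <= A /\ Rabs (v phi (t + s)) <= A) ->
  (forall s, Iv h s -> t + s < 0 -> Rabs (fst phi (t + s)) <= A /\ Rabs (snd phi (t + s)) <= A) ->
  norm0 h (shift (sol phi) t) <= A.
Proof.
  intros Xphi Ht Hsol Hinit. unfold norm0. apply Rmax_lub; simpl.
  - apply (sup0_shift_le h h_pos (w phi) (fst phi)); auto.
    + intros s Hs. apply (sol_initial phi s Xphi Hs).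
    + intros s Hs Hts. apply (Hsol s Hs Hts).
    + intros s Hs Hts. apply (Hinit s Hs Hts).
  - apply (sup0_shift_le h h_pos (v phi) (snd phi)); auto.
    + intros s Hs. apply (sol_initial phi s Xphi Hs).
    + intros s Hs Hts. apply (Hsol s Hs Hts).
    + intros s Hs Hts. apply (Hinit s Hs Hts).
Qed.

Lemma norm1_shift_le phi t A J : Xp phi -> 0 <= t ->
  (forall s, Iv h s -> 0 <= t + s ->
     Rabs (w phi (t + s)) <= A /\ Rabs (v phi (t + s)) <= A /\ Rabs (jx phi (t + s)) <= J) ->
  (forall s, Iv h s -> t + s < 0 ->
     Rabs (fst phi (t + s)) <= A /\ Rabs (snd phi (t + s)) <= A /\
     Rabs (dseg h (fst phi) (t + s)) <= A /\ Rabs (dseg h (snd phi) (t + s)) <= A) ->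
  norm1 h (shift (sol phi) t) <= (M + mu + 2) * A + J.
Proof.
  (* derivative bounds: M A for w, J + mu A for v, A for the initial datum *)
  intros Xphi Ht Hsol Hinit.
  destruct (Hsol 0 (Iv_0 h h_pos) ltac:(lra)) as [A0 [_ J0]].
  assert (HA : 0 <= A) by (generalize (Rabs_pos (w phi (t + 0))); lra).
  assert (HJ : 0 <= J) by (generalize (Rabs_pos (jx phi (t + 0))); lra).
  assert (HMA : 0 <= M * A) by (apply Rmult_le_pos; auto using M_ge0).
  assert (HmuA : 0 <= mu * A) by (apply Rmult_le_pos; lra).
  destruct (proj1 Xphi) as [Cp1 [Cp2 _]].
  destruct (sol_shift_inUp phi t Xphi Ht) as [Cx1 [Cx2 _]].
  unfold norm1. replace ((M + mu + 2) * A + J) with (A + (M * A + J + mu * A + A)) by ring.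
  apply Rplus_le_compat.
  { apply norm0_shift_le; auto.
    - intros s Hs Hts. destruct (Hsol s Hs Hts) as [? [? ?]]; auto.
    - intros s Hs Hts. destruct (Hinit s Hs Hts) as [? [? ?]]; auto. }
  apply Rmax_lub.
  - apply (sup0_dseg_shift_le h h_pos (w phi) (fst phi)
             (fun tau => q (v phi tau) * w phi tau)); auto.
    + intros s Hs. apply (sol_initial phi s Xphi Hs).
    + intros tau Htau. apply (sol_deriv phi tau Xphi Htau).
    + intros s Hs Hts. destruct (Hsol s Hs ltac:(lra)) as [Hw _].
      generalize (q_w_le phi (t + s) A Xphi ltac:(lra) Hw). lra.
    + intros s Hs Hts. destruct (Hinit s Hs Hts) as [_ [_ [? _]]]. lra.
  - apply (sup0_dseg_shift_le h h_pos (v phi) (snd phi)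
             (fun tau => jx phi tau - mu * v phi tau)); auto.
    + intros s Hs. apply (sol_initial phi s Xphi Hs).
    + intros tau Htau. apply (sol_deriv phi tau Xphi Htau).
    + intros s Hs Hts. destruct (Hsol s Hs ltac:(lra)) as [_ [Hv Hj]].
      eapply Rle_trans; [apply Rabs_triang|].
      rewrite Rabs_Ropp, Rabs_mult, (Rabs_pos_eq mu) by lra.
      assert (mu * Rabs (v phi (t + s)) <= mu * A) by (apply Rmult_le_compat_l; lra). lra.
    + intros s Hs Hts. destruct (Hinit s Hs Hts) as [_ [_ [_ ?]]]. lra.
Qed.

Lemma Ccont0_F_of_j : Ccont0_j h j -> Ccont0_F h (Ff q j mu).
Proof.
  intros Hjc eps Heps.
  set (K := M + mu + 1). assert (HK : 0 < K) by (generalize M_ge0; unfold K; lra).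
  destruct (Hjc (eps / 2) ltac:(lra)) as [dj [Hdj Kj]].
  set (d := Rmin dj (eps / (2 * K))).
  assert (Hd : 0 < d) by (apply Rmin_pos; auto; apply Rdiv_lt_0_compat; lra).
  assert (HdK : d * K <= eps / 2).
  { apply (Rle_trans _ (eps / (2 * K) * K)); [apply Rmult_le_compat_r; [lra | apply Rmin_r]|].
    right; field; lra. }
  exists d. split; auto. intros p Up Hn.
  destruct (inUp_le_norm h h_pos p 0 Up (Iv_0 h h_pos)) as [A1 [A2 _]].
  assert (Hj := Kj p Up (Rlt_le_trans _ _ _ Hn (Rmin_l _ _))).
  destruct (proj2 (proj2 Up) 0 (Iv_0 h h_pos)) as [P1 P2].
  assert (Hq : Rabs (q (snd p 0)) <= M) by (apply q_bounded; lra).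
  generalize M_ge0; intros M0.
  unfold norm2, Ff; simpl. apply Rmax_lub_lt.
  - replace (q (snd p 0) * fst p 0 - q 0 * 0) with (q (snd p 0) * fst p 0) by ring.
    rewrite Rabs_mult.
    assert (Rabs (q (snd p 0)) * Rabs (fst p 0) <= M * d)
      by (apply Rmult_le_compat; try apply Rabs_pos; lra).
    unfold K in HdK. nra.
  - replace (j p - mu * snd p 0 - (j zseg - mu * 0)) with ((j p - j zseg) - mu * snd p 0) by ring.
    eapply Rle_lt_trans; [apply Rabs_triang|].
    rewrite Rabs_Ropp, Rabs_mult, (Rabs_pos_eq mu) by lra.
    assert (mu * Rabs (snd p 0) <= mu * d) by (apply Rmult_le_compat_l; lra).
    unfold K in HdK. nra.
Qed.

Lemma conv0_norm1_of_components phi : Xp phi ->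
  is_lim (w phi) p_infty 0 -> is_lim (v phi) p_infty 0 ->
  is_lim (fun t => jx phi t) p_infty 0 -> conv0 (norm1 h) (sol phi).
Proof.
  intros Xphi Hw Hv Hj. rewrite is_lim_p_infty_0_eps in Hw, Hv, Hj.
  unfold conv0. rewrite is_lim_p_infty_0_eps. intros eps Heps.
  set (K := M + mu + 2). assert (HK : 0 < K) by (generalize M_ge0; unfold K; lra).
  set (A := eps / (2 * K)). assert (HA : 0 < A) by (apply Rdiv_lt_0_compat; lra).
  eapply filter_imp; [|apply (window_eventually h), filter_and;
    [apply filter_and; [exact (Hw A HA) | exact (Hv A HA)] | exact (Hj (eps / 4) ltac:(lra))]].
  intros t [Ht Hwin].
  assert (Hn0 := norm0_ge0 h h_pos (shift (sol phi) t)).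
  assert (Hn01 := norm0_le_norm1 h h_pos (shift (sol phi) t)).
  rewrite Rabs_pos_eq by lra.
  eapply Rle_lt_trans; [apply (norm1_shift_le phi t A (eps / 4) Xphi Ht)|].
  - intros s Hs _. destruct (Hwin s Hs) as [_ [[? ?] ?]]. repeat split; lra.
  - intros s Hs Hts. destruct (Hwin s Hs). lra.
  - fold K. replace (K * A) with (eps / 2) by (unfold A; field; lra). lra.
Qed.

Section ContinuousAtZero.

Hypothesis j_zseg : j zseg = 0.
Hypothesis j_Ccont0 : Ccont0_j h j.

Lemma j_sol_small eps : 0 < eps -> exists del, 0 < del /\ forall phi t, Xp phi -> 0 <= t ->
  norm0 h (shift (sol phi) t) < del -> Rabs (jx phi t) < eps.
Proof.
  intros Heps. destruct (j_Ccont0 eps Heps) as [d [Hd Kd]]. exists d. split; auto.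
  intros phi t Xphi Ht Hn. rewrite <- (Rminus_0_r (jx phi t)), <- j_zseg.
  apply Kd; auto. apply sol_shift_inUp; auto.
Qed.

Lemma conv0_norm1_of_norm0 phi : Xp phi ->
  conv0 (norm0 h) (sol phi) -> conv0 (norm1 h) (sol phi).
Proof.
  intros Xphi Hconv. unfold conv0 in Hconv. rewrite is_lim_p_infty_0_eps in Hconv.
  assert (Hsmall : forall eps, 0 < eps -> Rbar_locally p_infty
            (fun t => 0 <= t /\ norm0 h (shift (sol phi) t) < eps)).
  { intros eps Heps.
    eapply filter_imp; [|apply filter_and; [exact (eventually_ge 0) | exact (Hconv eps Heps)]].
    intros t [Ht Hn]. rewrite Rabs_pos_eq in Hn by (apply norm0_ge0; auto). auto. }
  apply conv0_norm1_of_components; auto; rewrite is_lim_p_infty_0_eps.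
  - intros eps Heps. eapply filter_imp; [|exact (Hsmall eps Heps)].
    intros t [Ht Hn]. generalize (proj1 (sol_le_norm0 phi t Xphi Ht)). lra.
  - intros eps Heps. eapply filter_imp; [|exact (Hsmall eps Heps)].
    intros t [Ht Hn]. generalize (proj2 (sol_le_norm0 phi t Xphi Ht)). lra.
  - intros eps Heps. destruct (j_sol_small eps Heps) as [d [Hd Kd]].
    eapply filter_imp; [|exact (Hsmall d Hd)]. intros t [Ht Hn]. auto.
Qed.

Lemma stable_norm1_of_norm0 (E : seg -> Prop) : (forall p, E p -> Xp p) ->
  stable_on (norm0 h) sol E -> stable_on (norm1 h) sol E.
Proof.
  intros HE Hst eps Heps.
  set (K := M + mu + 2). assert (HK : 0 < K) by (generalize M_ge0; unfold K; lra).
  destruct (j_sol_small (eps / 4) ltac:(lra)) as [dj [Hdj Kj]].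
  set (eta := Rmin dj (eps / (4 * K))).
  assert (Heta : 0 < eta) by (apply Rmin_pos; auto; apply Rdiv_lt_0_compat; lra).
  assert (HetaK : K * eta <= eps / 4).
  { rewrite Rmult_comm. apply (Rle_trans _ (eps / (4 * K) * K));
      [apply Rmult_le_compat_r; [lra | apply Rmin_r] | right; field; lra]. }
  destruct (Hst eta Heta) as [d0 [Hd0 K0]].
  exists (Rmin d0 eta). split; [apply Rmin_pos; auto|].
  intros phi Ephi Hn t Ht. assert (Xphi := HE phi Ephi).
  assert (Hn0 := norm0_ge0 h h_pos phi). assert (Hn01 := norm0_le_norm1 h h_pos phi).
  assert (Hd0' := Rlt_le_trans _ _ _ Hn (Rmin_l d0 eta)).
  assert (Het := Rlt_le_trans _ _ _ Hn (Rmin_r d0 eta)).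
  assert (Hx : forall t', 0 <= t' -> norm0 h (shift (sol phi) t') < eta)
    by (intros; apply K0; auto; lra).
  eapply Rle_lt_trans; [apply (norm1_shift_le phi t eta (eps / 4)); auto|].
  - intros s Hs Hts. destruct (sol_le_norm0 phi (t + s) Xphi Hts) as [A1 A2].
    assert (B := Hx (t + s) Hts). repeat split; try lra.
    apply Rlt_le, Kj; auto. eapply Rlt_le_trans; [exact B | apply Rmin_l].
  - intros s Hs Hts. assert (Iv h (t + s)) by (unfold Iv in *; lra).
    destruct (inUp_le_norm h h_pos phi (t + s) (proj1 Xphi) H) as [A1 [A2 [A3 A4]]].
    repeat split; lra.
  - fold K. lra.
Qed.

End ContinuousAtZero.

Section VanishingWithW.

Hypothesis j_nonneg : forall p, inUp h p -> 0 <= j p.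
Hypothesis j_vanishes : vanishes_with_fst h j.

(* [v] stays below [b] on a short interval [0, T] by continuity; the comparison
   takes over from [T]. *)
Lemma v_le_of_j_le phi b t : Xp phi -> snd phi 0 < b -> 0 <= t ->
  (forall tau, 0 <= tau -> jx phi tau <= mu * b) -> v phi t <= b.
Proof.
  intros Xphi Hb Ht Hj.
  assert (v0 : v phi 0 = snd phi 0) by apply (sol_initial phi 0 Xphi (Iv_0 h h_pos)).
  destruct (Req_dec t 0) as [->|nt]; [lra|].
  destruct (deriv_within_continuous _ _ _ _ (proj2 (sol_deriv phi 0 Xphi (Rle_refl 0)))
              (b - snd phi 0)) as [rho [Hrho Kr]]; [lra|].
  set (T := Rmin t (rho / 2)).
  assert (HT0 : 0 < T) by (apply Rmin_pos; lra).
  assert (HTt : T <= t) by apply Rmin_l.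
  assert (vT : v phi T < b).
  { assert (HTr : T <= rho / 2) by apply Rmin_r.
    assert (K := Kr T ltac:(lra) ltac:(rewrite Rminus_0_r, Rabs_pos_eq; lra)).
    rewrite v0 in K. generalize (Rle_abs (v phi T - snd phi 0)). lra. }
  assert (C : (v phi t - mu * b / mu) * exp (mu * t) <= (v phi T - mu * b / mu) * exp (mu * T)).
  { apply (decay_comparison (v phi) (fun x => jx phi x - mu * v phi x)); auto.
    - intros x Hx. apply v_is_derive; auto; lra.
    - intros x Hx. generalize (Hj x ltac:(lra)). lra. }
  replace (mu * b / mu) with b in C by (field; lra).
  generalize (exp_pos (mu * t)) (exp_pos (mu * T)). nra.
Qed.

Lemma small_data_bounds (E : seg -> Prop) b : 0 < b -> (forall p, E p -> Xp p) ->
  (forall p t, E p -> 0 <= t -> sup0 h (fst (shift (sol p) t)) <= sup0 h (fst p)) ->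
  exists del, 0 < del /\ del <= b /\ forall phi, E phi -> norm0 h phi < del ->
    forall t, 0 <= t ->
      Rabs (w phi t) <= b /\ Rabs (v phi t) <= b /\ Rabs (jx phi t) <= mu * b.
Proof.
  intros Hb HE Hmon.
  destruct (j_vanishes (mu * b) ltac:(nra)) as [dj [Hdj Kj]].
  exists (Rmin dj b). split; [apply Rmin_pos; auto|]. split; [apply Rmin_r|].
  intros phi Ephi Hn. assert (Xphi := HE phi Ephi).
  assert (Hw0 : sup0 h (fst phi) <= norm0 h phi) by apply Rmax_l.
  assert (Hwt : forall t, 0 <= t -> sup0 h (fst (shift (sol phi) t)) < Rmin dj b)
    by (intros t Ht; generalize (Hmon phi t Ephi Ht); lra).
  assert (Jb : forall t, 0 <= t -> 0 <= jx phi t <= mu * b).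
  { intros t Ht. assert (U := sol_shift_inUp phi t Xphi Ht). split; auto.
    apply Kj; auto. generalize (Hwt t Ht) (Rmin_l dj b). lra. }
  intros t Ht. destruct (sol_nonneg phi t Xphi Ht) as [W0 V0].
  assert (V1 : v phi t <= b).
  { apply (v_le_of_j_le phi b t Xphi); auto; [|intros; apply Jb; auto].
    destruct (inUp_le_norm h h_pos phi 0 (proj1 Xphi) (Iv_0 h h_pos)) as [_ [A _]].
    generalize (Rle_abs (snd phi 0)) (Rmin_r dj b). lra. }
  split; [generalize (sol_le_sup0 phi t Xphi Ht) (Hwt t Ht) (Rmin_r dj b); lra|].
  rewrite (Rabs_pos_eq (v phi t)) by lra. split; auto.
  rewrite Rabs_pos_eq; apply Jb; auto.
Qed.

Lemma stable_norm0_of_w_nonincreasing (E : seg -> Prop) : (forall p, E p -> Xp p) ->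
  (forall p t, E p -> 0 <= t -> sup0 h (fst (shift (sol p) t)) <= sup0 h (fst p)) ->
  stable_on (norm0 h) sol E.
Proof.
  intros HE Hmon eps Heps.
  destruct (small_data_bounds E (eps / 2) ltac:(lra) HE Hmon) as [d [Hd [Hdb K]]].
  exists d; split; auto. intros phi Ephi Hn t Ht. assert (Xphi := HE phi Ephi).
  apply (Rle_lt_trans _ (eps / 2)); [|lra].
  apply norm0_shift_le; auto.
  - intros s Hs Hts. destruct (K phi Ephi Hn (t + s) Hts) as [? [? _]]; auto.
  - intros s Hs Hts. assert (Iv h (t + s)) by (unfold Iv in *; lra).
    destruct (inUp_le_norm h h_pos phi (t + s) (proj1 Xphi) H) as [A1 [A2 _]]. lra.
Qed.

Lemma stable_norm1_of_w_nonincreasing (E : seg -> Prop) : (forall p, E p -> Xp p) ->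
  (forall p t, E p -> 0 <= t -> sup0 h (fst (shift (sol p) t)) <= sup0 h (fst p)) ->
  stable_on (norm1 h) sol E.
Proof.
  intros HE Hmon eps Heps.
  set (K := M + 2 * mu + 2). assert (HK : 0 < K) by (generalize M_ge0; unfold K; lra).
  set (b := eps / (2 * K)). assert (Hb : 0 < b) by (apply Rdiv_lt_0_compat; lra).
  destruct (small_data_bounds E b Hb HE Hmon) as [d [Hd [Hdb Kb]]].
  exists d; split; auto. intros phi Ephi Hn t Ht. assert (Xphi := HE phi Ephi).
  assert (Hn0 := norm0_ge0 h h_pos phi). assert (Hn01 := norm0_le_norm1 h h_pos phi).
  eapply Rle_lt_trans; [apply (norm1_shift_le phi t b (mu * b)); auto|].
  - intros s Hs Hts. apply (Kb phi Ephi ltac:(lra) (t + s) Hts).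
  - intros s Hs Hts. assert (Iv h (t + s)) by (unfold Iv in *; lra).
    destruct (inUp_le_norm h h_pos phi (t + s) (proj1 Xphi) H) as [A1 [A2 [A3 A4]]].
    repeat split; lra.
  - replace ((M + mu + 2) * b + mu * b) with (K * b) by (unfold K; ring).
    replace (K * b) with (eps / 2) by (unfold b; field; lra). lra.
Qed.

Lemma j_sol_to_0 phi : Xp phi -> is_lim (w phi) p_infty 0 -> is_lim (fun t => jx phi t) p_infty 0.
Proof.
  intros Xphi Hw. rewrite is_lim_p_infty_0_eps in *. intros eps Heps.
  destruct (j_vanishes (eps / 2) ltac:(lra)) as [dj [Hdj Kj]].
  eapply filter_imp; [|exact (window_eventually h _ (Hw dj Hdj))].
  intros t [Ht Hwin].
  assert (U := sol_shift_inUp phi t Xphi Ht).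
  assert (jx phi t <= eps / 2).
  { apply Kj; auto. apply sup0_le; auto. intros s Hs. apply Rlt_le, (Hwin s Hs). }
  rewrite Rabs_pos_eq; auto. lra.
Qed.

Lemma v_to_0 phi : Xp phi -> is_lim (fun t => jx phi t) p_infty 0 -> is_lim (v phi) p_infty 0.
Proof.
  intros Xphi Hj. rewrite is_lim_p_infty_0_eps in *. intros eta Heta.
  destruct (Hj (mu * eta / 2) ltac:(nra)) as [T1 K1].
  set (T := Rmax T1 0 + 1).
  assert (HT1 : T1 < T) by (generalize (Rmax_l T1 0); unfold T; lra).
  assert (HT0 : 0 < T) by (generalize (Rmax_r T1 0); unfold T; lra).
  set (Y := (v phi T - eta / 2) * exp (mu * T)).
  assert (C : forall t, T <= t -> (v phi t - eta / 2) * exp (mu * t) <= Y).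
  { intros t Ht. unfold Y. replace (eta / 2) with (mu * eta / 2 / mu) by (field; lra).
    apply (decay_comparison (v phi) (fun x => jx phi x - mu * v phi x)); auto.
    - intros x Hx. apply v_is_derive; auto; lra.
    - intros x Hx. generalize (K1 x ltac:(lra)) (Rle_abs (jx phi x)). lra. }
  eapply filter_imp; [|apply filter_and;
    [exact (exp_eventually_dominates Y (eta / 2) mu ltac:(lra) mu_pos) | exact (eventually_ge T)]].
  intros t [HY Ht].
  assert (Ce := C t ltac:(lra)). assert (He := exp_pos (mu * t)).
  assert (V0 := proj2 (sol_nonneg phi t Xphi ltac:(lra))).
  rewrite Rabs_pos_eq by lra.
  assert (v phi t - eta / 2 < eta / 2) by (apply (Rmult_lt_reg_r (exp (mu * t))); lra).
  lra.
Qed.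

Lemma conv0_of_w_to_0 phi : Xp phi -> is_lim (w phi) p_infty 0 ->
  conv0 (norm0 h) (sol phi) /\ conv0 (norm1 h) (sol phi).
Proof.
  intros Xphi Hw.
  assert (Hj := j_sol_to_0 phi Xphi Hw).
  assert (H1 : conv0 (norm1 h) (sol phi))
    by (apply conv0_norm1_of_components; auto; apply v_to_0; auto).
  split; auto. apply conv0_norm0_of_norm1; auto.
Qed.

End VanishingWithW.

End Semiflow.

Theorem lemma9 (h Rm mu : R) (q : R -> R) (j : seg -> R) (sol : seg -> seg) :
  0 < h -> Rm < 0 -> 0 < mu ->
  (* j is a function of the segments on [-h,0] only *)
  (forall p r : seg, (forall s, Iv h s -> fst p s = fst r s /\ snd p s = snd r s) ->
     j p = j r) ->
  (* q is bounded and C^1 on I = (Rm, oo) *)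
  (exists M, forall y, Rm < y -> Rabs (q y) <= M) ->
  (forall y, Rm < y -> ex_derive q y /\ continuous (Derive q) y) ->
  (* j >= 0 on U_+ *)
  (forall p, inUp h p -> 0 <= j p) ->
  (* j is ||.||_0-Lipschitz on bounded subsets of U_+ *)
  (forall B, exists L, forall p r, inUp h p -> inUp h r -> norm1 h p <= B -> norm1 h r <= B ->
     Rabs (j p - j r) <= L * norm0 h (segsub p r)) ->
  (* j(B1 x B2) is bounded whenever B1 x B2 in U_+ with B1 bounded *)
  (forall B, exists K, forall p, inUp h p -> norm1 h (fst p, fun _ => 0) <= B ->
     Rabs (j p) <= K) ->
  (* global solutions from X_+, staying in X_+ (the semiflow) *)
  (forall phi, inXp h q j mu phi ->
     is_solution h q j mu (sol phi) phi /\
     forall t, 0 <= t -> inXp h q j mu (shift (sol phi) t)) ->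
  (* (a) *)
  (((j zseg = 0 <-> Ff q j mu zseg = (0, 0)) /\
    (Ff q j mu zseg = (0, 0) <-> inXp h q j mu zseg) /\
    (inXp h q j mu zseg <-> is_solution h q j mu zseg zseg)) /\
   (j zseg = 0 -> exists p, inXp h q j mu p) /\
   (Ccont0_j h j -> Ccont0_F h (Ff q j mu)) /\
   (j zseg = 0 -> Ccont0_j h j ->
      (forall phi, inXp h q j mu phi -> conv0 (norm0 h) (sol phi) -> conv0 (norm1 h) (sol phi)) /\
      (glob_attr (norm0 h) sol (inXp h q j mu) -> glob_attr (norm1 h) sol (inXp h q j mu)) /\
      (forall E : seg -> Prop, (forall p, E p -> inXp h q j mu p) ->
         stable_on (norm0 h) sol E -> stable_on (norm1 h) sol E) /\
      (GAS (norm0 h) sol (inXp h q j mu) -> GAS (norm1 h) sol (inXp h q j mu)))) /\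
  ((j zseg = 0 /\
    (forall eps, 0 < eps -> exists del, 0 < del /\
       forall p, inUp h p -> sup0 h (fst p) <= del -> j p <= eps)) ->
   (* (b) *)
   (forall E : seg -> Prop, (forall p, E p -> inXp h q j mu p) -> E zseg ->
      (forall p t, E p -> 0 <= t -> sup0 h (fst (shift (sol p) t)) <= sup0 h (fst p)) ->
      stable_on (norm0 h) sol E /\ stable_on (norm1 h) sol E) /\
   (* (c) *)
   (forall phi, inXp h q j mu phi -> is_lim (fst (sol phi)) p_infty 0 ->
      conv0 (norm0 h) (sol phi) /\ conv0 (norm1 h) (sol phi)) /\
   ((forall phi, inXp h q j mu phi -> is_lim (fst (sol phi)) p_infty 0) ->
      glob_attr (norm0 h) sol (inXp h q j mu) /\ glob_attr (norm1 h) sol (inXp h q j mu))).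
Proof.
  intros Hh HRm Hmu _ [M HM] _ Hjnn _ _ Hsf.
  assert (Z1 := Ff_zseg q j mu). assert (Z2 := inXp_zseg h q j mu Hh).
  assert (Z3 := is_solution_zseg h q j mu).
  split.
  - split; [split; [|split]; tauto|].
    split; [intros Hj0; exists zseg; tauto|].
    split; [apply (Ccont0_F_of_j h Rm mu M); auto|].
    intros Hj0 Hjc.
    assert (Hconv : forall phi, inXp h q j mu phi ->
              conv0 (norm0 h) (sol phi) -> conv0 (norm1 h) (sol phi))
      by (intros; eapply conv0_norm1_of_norm0; eauto).
    assert (Hstab : forall E : seg -> Prop, (forall p, E p -> inXp h q j mu p) ->
              stable_on (norm0 h) sol E -> stable_on (norm1 h) sol E)
      by (intros; eapply stable_norm1_of_norm0; eauto).
    split; [exact Hconv|]. split; [intros Ha phi Xphi; auto|]. split; [exact Hstab|].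
    intros [Hs Ha]. split; [apply Hstab; auto | intros phi Xphi; auto].
  - intros [_ Hjv].
    assert (Hc : forall phi, inXp h q j mu phi -> is_lim (fst (sol phi)) p_infty 0 ->
              conv0 (norm0 h) (sol phi) /\ conv0 (norm1 h) (sol phi))
      by (intros; eapply conv0_of_w_to_0; eauto).
    split; [intros E HE _ Hmon; split|].
    + eapply stable_norm0_of_w_nonincreasing; eauto.
    + eapply stable_norm1_of_w_nonincreasing; eauto.
    + split; [exact Hc|]. intros Hall. split; intros phi Xphi; apply Hc; auto.
Qed.
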